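(* Let $M$ be a quasi-pseudo principally injective right $R$-module. Then $M$ is continuous if and only if $M$ is quasi-continuous.
   Context: All rings are associative with identity and all modules are unitary right $R$-modules. A submodule $N$ of $M$ is called $M$-cyclic if $N\cong M/L$ for some submodule $L$ of $M$ (equivalently, $N$ is the image of an endomorphism of $M$). $M$ is quasi-pseudo principally injective if for every $M$-cyclic submodule $A$ of $M$, every $R$-monomorphism $A\to M$ extends to an $R$-endomorphism of $M$. Conditions: (C$_1$) every submodule of $M$ is essential in a direct summand of $M$; (C$_2$) every submodule of $M$ isomorphic to a direct summand of $M$ is itself a direct summand of $M$; (C$_3$) if $A,B$ are direct summands of $M$ with $A\cap B=0$ then $A\oplus B$ is a direct summand of $M$. $M$ is continuous if it satisfies (C$_1$) and (C$_2$), and quasi-continuous if it satisfies (C$_1$) and (C$_3$). *)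

(* Right R-modules over an arbitrary (associative, unital)
   ring R are modelled as left modules over the converse ring R^c:
   for M : lmodType R^c and a : R, the right action m.a is  a *: m. *)
From HB Require Import structures.
From mathcomp Require Import all_boot all_order all_algebra.
Set Implicit Arguments. Unset Strict Implicit. Unset Printing Implicit Defensive.
Import GRing.Theory.
Local Open Scope ring_scope.

Section Modules.
Variables (R : pzRingType) (M : lmodType R^c).

(* Submodules are predicates (modules may be infinite). *)
Definition submodule (N : M -> Prop) : Prop :=
  [/\ N 0, (forall x y, N x -> N y -> N (x + y))
     & (forall (a : R^c) x, N x -> N (a *: x))].

Definition subset_of (A B : M -> Prop) : Prop := forall x, A x -> B x.

Definition endo (f : M -> M) : Prop :=
  (forall x y, f (x + y) = f x + f y) /\ (forall (a : R^c) x, f (a *: x) = a *: f x).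

(* An R-homomorphism from the submodule A into M, given as a map on M
   whose behaviour on A is what matters. *)
Definition hom_on (A : M -> Prop) (f : M -> M) : Prop :=
  (forall x y, A x -> A y -> f (x + y) = f x + f y) /\
  (forall (a : R^c) x, A x -> f (a *: x) = a *: f x).

Definition mono_on (A : M -> Prop) (f : M -> M) : Prop :=
  hom_on A f /\ (forall x y, A x -> A y -> f x = f y -> x = y).

Definition iso_sub (A B : M -> Prop) : Prop :=
  exists f : M -> M, [/\ mono_on A f, (forall x, A x -> B (f x))
                       & (forall y, B y -> exists2 x, A x & f x = y)].

(* N is M-cyclic: N is the image of an endomorphism of M
   (equivalently N ~ M/L for a submodule L). *)
Definition M_cyclic (N : M -> Prop) : Prop :=
  submodule N /\ exists f : M -> M, endo f /\ (forall y, N y <-> exists x, f x = y).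

Definition qppi : Prop :=
  forall A : M -> Prop, M_cyclic A ->
  forall g : M -> M, mono_on A g ->
  exists h : M -> M, endo h /\ (forall x, A x -> h x = g x).

Definition direct_summand (A : M -> Prop) : Prop :=
  submodule A /\ exists B : M -> Prop,
    [/\ submodule B, (forall x, A x -> B x -> x = 0)
      & (forall m, exists a b, [/\ A a, B b & m = a + b])].

Definition essential_in (A B : M -> Prop) : Prop :=
  subset_of A B /\
  forall C : M -> Prop, submodule C -> subset_of C B ->
    (forall x, C x -> A x -> x = 0) -> forall x, C x -> x = 0.

Definition C1 : Prop :=
  forall A, submodule A -> exists2 D, direct_summand D & essential_in A D.

Definition C2 : Prop :=
  forall A D, submodule A -> direct_summand D -> iso_sub A D -> direct_summand A.

Definition C3 : Prop :=
  forall A B, direct_summand A -> direct_summand B ->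
    (forall x, A x -> B x -> x = 0) ->
    direct_summand (fun m => exists a b, [/\ A a, B b & m = a + b]).

Definition continuous : Prop := C1 /\ C2.
Definition quasi_continuous : Prop := C1 /\ C3.

End Modules.

(* C3 follows from C2 for any module: if A is a summand with complement A' and
   A ∩ B = 0, then A' ∩ (A + B) ≅ B, so by C2 it has a complement K, and
   A' ∩ K complements A + B.  Conversely, under quasi-pseudo principal
   injectivity, C1 already gives C2: let f : A ≅ D with D a summand.  D is the
   image of its projection p, so f^-1 extends to an endomorphism h and A, the
   image of h ∘ p, is M-cyclic; hence f extends to an endomorphism k.  If A is
   essential in the summand E given by C1, the kernel of p ∘ k on E meets A
   trivially, and p ∘ k maps E into f(A); this forces E = A. *)
From mathcomp Require Import all_boot all_order all_algebra.
From Stdlib Require Import ClassicalEpsilon.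
Set Implicit Arguments. Unset Strict Implicit. Unset Printing Implicit Defensive.
Import GRing.Theory.
Local Open Scope ring_scope.

Section Submodules.
Variables (R : pzRingType) (M : lmodType R^c).
Implicit Types (A B D E K X Y : M -> Prop) (f g p : M -> M).

Definition independent X Y : Prop := forall x, X x -> Y x -> x = 0.
Definition addsub X Y (m : M) : Prop := exists x y, [/\ X x, Y y & m = x + y].
Definition capsub X Y (m : M) : Prop := X m /\ Y m.
Definition complement X Y : Prop :=
  [/\ submodule Y, independent X Y & forall m, addsub X Y m].

Lemma submodule0 X : submodule X -> X 0.
Proof. by case. Qed.

Lemma submoduleD X x y : submodule X -> X x -> X y -> X (x + y).
Proof. by case=> _ HD _; apply: HD. Qed.

Lemma submoduleZ X (a : R^c) x : submodule X -> X x -> X (a *: x).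
Proof. by case=> _ _ HZ; apply: HZ. Qed.

Lemma submoduleN X x : submodule X -> X x -> X (- x).
Proof. by move=> HX Hx; rewrite -scaleN1r; apply: submoduleZ. Qed.

Lemma submoduleB X x y : submodule X -> X x -> X y -> X (x - y).
Proof. by move=> HX Hx Hy; apply: submoduleD (submoduleN HX Hy). Qed.

Lemma submodule_addsub X Y : submodule X -> submodule Y -> submodule (addsub X Y).
Proof.
move=> HX HY; split.
- by exists 0, 0; rewrite addr0; split=> //; apply: submodule0.
- move=> _ _ [x [y [Hx Hy ->]]] [x' [y' [Hx' Hy' ->]]].
  exists (x + x'), (y + y'); rewrite addrACA.
  by split=> //; apply: submoduleD.
- move=> a _ [x [y [Hx Hy ->]]].
  by exists (a *: x), (a *: y); rewrite scalerDr; split=> //; apply: submoduleZ.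
Qed.

Lemma submodule_capsub X Y : submodule X -> submodule Y -> submodule (capsub X Y).
Proof.
move=> HX HY; split.
- by split; apply: submodule0.
- by move=> x y [? ?] [? ?]; split; apply: submoduleD.
- by move=> a x [? ?]; split; apply: submoduleZ.
Qed.

Lemma direct_summand_ext A E :
  subset_of A E -> subset_of E A -> direct_summand E -> direct_summand A.
Proof.
move=> AE EA [[E0 ED EZ] [B [HB EB HdE]]]; split.
- split=> [|x y /AE Hx /AE Hy|a x /AE Hx]; apply: EA; by [apply: E0|apply: ED|apply: EZ].
- exists B; split=> // [x /AE|m]; first exact: EB.
  by have [x [y [/EA Hx Hy ->]]] := HdE m; exists x, y.
Qed.

Lemma addsub_uniq X Y x y x' y' : submodule X -> submodule Y -> independent X Y ->
  X x -> Y y -> X x' -> Y y' -> x + y = x' + y' -> x = x'.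
Proof.
move=> HX HY XY Hx Hy Hx' Hy' Exy.
have Ediff : x - x' = y' - y.
  by rewrite -[x](addrK y) Exy addrAC [x' + y']addrC addrK.
apply/eqP; rewrite -subr_eq0; apply/eqP; apply: XY; first exact: submoduleB.
by rewrite Ediff; apply: submoduleB.
Qed.

(* Arbitrary when [m] is not a sum of elements of [X] and [Y]. *)
Definition component X Y (m : M) : M :=
  epsilon (inhabits 0) (fun x => exists y, [/\ X x, Y y & m = x + y]).

Lemma componentE X Y x y : submodule X -> submodule Y -> independent X Y ->
  X x -> Y y -> component X Y (x + y) = x.
Proof.
move=> HX HY XY Hx Hy.
have [|y' [Hc Hy' E]] := epsilon_spec (inhabits 0)
  (fun x' => exists y', [/\ X x', Y y' & x + y = x' + y']); first by exists x, y.
by symmetry; apply: (addsub_uniq HX HY XY Hx Hy Hc Hy' E).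
Qed.

Lemma endo0 f : endo f -> f 0 = 0.
Proof. by case=> _ fZ; have := fZ 0 0; rewrite !scale0r. Qed.

Lemma endoB f x y : endo f -> f (x - y) = f x - f y.
Proof. by case=> fD fZ; rewrite fD -scaleN1r fZ scaleN1r. Qed.

Lemma endo_comp f g : endo f -> endo g -> endo (f \o g).
Proof. by move=> [fD fZ] [gD gZ]; split=> * /=; rewrite ?gD ?fD ?gZ ?fZ. Qed.

Lemma complement_projection D D' : submodule D -> complement D D' ->
  exists p, [/\ endo p, forall m, D (p m) & forall x, D x -> p x = x].
Proof.
move=> HD [HD' DD' HdD]; pose p := component D D'.
have pE a b : D a -> D' b -> p (a + b) = a by move=> Ha Hb; apply: componentE.
exists p; split.
- split=> [m m' | c m].
    have [a [b [Ha Hb ->]]] := HdD m; have [a' [b' [Ha' Hb' ->]]] := HdD m'.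
    by rewrite addrACA !pE //; apply: submoduleD.
  have [a [b [Ha Hb ->]]] := HdD m.
  by rewrite scalerDr !pE //; apply: submoduleZ.
- by move=> m; have [a [b [Ha Hb ->]]] := HdD m; rewrite pE.
- by move=> x Hx; rewrite -{1}[x]addr0 pE //; apply: submodule0.
Qed.

Lemma direct_summand_projection D : direct_summand D ->
  exists p, [/\ endo p, forall m, D (p m) & forall x, D x -> p x = x].
Proof. by case=> HD [D' HDD']; apply: complement_projection HDD'. Qed.

Lemma direct_summand_M_cyclic D : direct_summand D -> M_cyclic D.
Proof.
move=> HD; have [p [pendo pD pid]] := direct_summand_projection HD.
split; first by case: HD.
exists p; split=> // y; split=> [Hy | [x <-] //].
by exists y; apply: pid.
Qed.

Lemma mono_on_inverse A D f : submodule A -> submodule D -> mono_on A f ->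
  (forall y, D y -> exists2 x, A x & f x = y) ->
  exists g, [/\ mono_on D g, forall y, D y -> A (g y) & forall y, D y -> f (g y) = y].
Proof.
move=> HA HD [[fD fZ] finj] fonto.
pose g y := epsilon (inhabits 0) (fun x => A x /\ f x = y).
have [gA fg] : (forall y, D y -> A (g y)) /\ (forall y, D y -> f (g y) = y).
  split=> y /fonto [x Ax fx];
  by have [] := epsilon_spec (inhabits 0) (fun x => A x /\ f x = y)
    (ex_intro _ x (conj Ax fx)).
exists g; split=> //; split; last first.
  by move=> x y Hx Hy Exy; rewrite -(fg x Hx) -(fg y Hy) Exy.
split=> [x y Hx Hy | a x Hx]; apply: finj.
- by apply: gA; apply: submoduleD.
- by apply: submoduleD => //; apply: gA.
- rewrite fg; last exact: submoduleD.
  by rewrite fD; [rewrite !fg | apply: gA | apply: gA].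
- by apply: gA; apply: submoduleZ.
- by apply: submoduleZ => //; apply: gA.
- rewrite fg; last exact: submoduleZ.
  by rewrite fZ; [rewrite fg | apply: gA].
Qed.

(* The kernel of [phi] in [E] meets [A] trivially, and each [e] in [E] differs
   from some [a] in [A] by an element of that kernel. *)
Lemma essential_subset_of_endo A E phi : submodule A -> submodule E ->
  essential_in A E -> endo phi ->
  (forall x y, A x -> A y -> phi x = phi y -> x = y) ->
  (forall e, E e -> exists2 a, A a & phi e = phi a) -> subset_of E A.
Proof.
move=> HA HE [AE Aess] phi_endo phi_inj phiE e He.
have [a Ha Ephi] := phiE e He.
pose C x := E x /\ phi x = 0.
have HC : submodule C.
  case: (phi_endo) => phiD phiZ; split.
  - by split; [apply: submodule0 | apply: endo0].
  - by move=> x y [? Hx] [? Hy]; split; [apply: submoduleD | rewrite phiD Hx Hy addr0].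
  - by move=> c x [? Hx]; split; [apply: submoduleZ | rewrite phiZ Hx scaler0].
have CA : independent C A.
  move=> x [_ Hx] Ax; apply: phi_inj => //; first exact: submodule0.
  by rewrite Hx endo0.
have Cea : C (e - a).
  by split; [apply: submoduleB => //; apply: AE | rewrite endoB // Ephi subrr].
by rewrite -[e]subr0 -(Aess C HC (fun x (Cx : C x) => Cx.1) CA _ Cea) opprB addrC subrK.
Qed.

Section QuasiPseudoPrincipallyInjective.
Hypothesis qppiM : qppi M.

Lemma qppi_iso_summand_M_cyclic A D f : submodule A -> direct_summand D ->
  mono_on A f -> (forall x, A x -> D (f x)) ->
  (forall y, D y -> exists2 x, A x & f x = y) -> M_cyclic A.
Proof.
move=> HA HD fmono fAD fonto.
have [p [pendo pD pid]] := direct_summand_projection HD.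
have [g [gmono gA fg]] := mono_on_inverse HA HD.1 fmono fonto.
have [h [hendo hg]] := qppiM (direct_summand_M_cyclic HD) gmono.
split=> //; exists (h \o p); split; first exact: endo_comp.
move=> y; split=> [Ay | [x <-] /=]; last by rewrite hg //; apply: gA.
exists (f y) => /=; rewrite pid ?hg //; try exact: fAD.
by apply: fmono.2 => //; [apply/gA/fAD | rewrite fg //; apply: fAD].
Qed.

Lemma qppi_C1_C2 : C1 M -> C2 M.
Proof.
move=> HC1 A D HA HD [f [fmono fAD fonto]].
have [p [pendo pD pid]] := direct_summand_projection HD.
have [k [kendo kf]] := qppiM (qppi_iso_summand_M_cyclic HA HD fmono fAD fonto) fmono.
have [E HE AessE] := HC1 A HA.
have pkf x : A x -> (p \o k) x = f x by move=> Ax /=; rewrite kf // pid //; apply: fAD.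
apply: (direct_summand_ext AessE.1 _ HE).
apply: (essential_subset_of_endo HA HE.1 AessE (endo_comp pendo kendo)).
  by move=> x y Ax Ay; rewrite !pkf //; apply: fmono.2.
move=> e _; have [a Ha fa] := fonto _ (pD (k e)).
by exists a; rewrite // (pkf a Ha) fa.
Qed.

End QuasiPseudoPrincipallyInjective.

Section ComplementOfSum.
Variables (A A' B : M -> Prop).
Hypotheses (HA : submodule A) (HB : submodule B) (AA' : complement A A').
Hypothesis AB : independent A B.

Lemma cap_complement_sum_iso : iso_sub (capsub A' (addsub A B)) B.
Proof.
have [HA' A_A' HdA] := AA'.
have BA : independent B A by move=> x Bx Ax; apply: AB.
pose f := component B A.
have fE a b : A a -> B b -> f (a + b) = b by move=> Ha Hb; rewrite /f addrC componentE.
exists f; split.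
- split; first split.
  + move=> _ _ [_ [a [b [Ha Hb ->]]]] [_ [a' [b' [Ha' Hb' ->]]]].
    by rewrite addrACA !fE //; apply: submoduleD.
  + move=> c _ [_ [a [b [Ha Hb ->]]]].
    by rewrite scalerDr !fE //; apply: submoduleZ.
  + move=> x y [A'x [a [b [Ha Hb Ex]]]] [A'y [a' [b' [Ha' Hb' Ey]]]].
    rewrite {}Ex {}Ey !fE // in A'x A'y * => ?; subst b'.
    apply/eqP; rewrite -subr_eq0; apply/eqP.
    apply: A_A'; last exact: submoduleB.
    by rewrite opprD addrACA subrr addr0; apply: submoduleB.
- by move=> _ [_ [a [b [Ha Hb ->]]]]; rewrite fE.
- move=> b Hb; have [a [a' [Ha Ha' Eb]]] := HdA b.
  have Ea' : a' = - a + b by rewrite Eb addKr.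
  exists a'; last by rewrite Ea' fE //; apply: submoduleN.
  by split=> //; exists (- a), b; split=> //; apply: submoduleN.
Qed.

Lemma complement_sum_of_cap K : complement (capsub A' (addsub A B)) K ->
  complement (addsub A B) (capsub A' K).
Proof.
have [HA' A_A' HdA] := AA'.
move=> [HK PK HdP]; split.
- exact: submodule_capsub.
- by move=> x ABx [A'x Kx]; apply: PK.
- move=> m; have [a0 [a1 [Ha0 Ha1 ->]]] := HdA m.
  have [q [k [[A'q [a2 [b [Ha2 Hb Ea2b]]]] Kk Ea1]]] := HdP a1.
  have Ek : k = a1 - q by rewrite Ea1 addrC addKr.
  exists (a0 + a2 + b), k; split.
  + by exists (a0 + a2), b; split=> //; apply: submoduleD.
  + by split=> //; rewrite Ek; apply: submoduleB.
  + by rewrite Ea1 Ea2b !addrA.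
Qed.

End ComplementOfSum.

Lemma C2_C3 : C2 M -> C3 M.
Proof.
move=> HC2 A B [HA [A' AA']] HBs AB.
have [HA' _ _] := AA'.
have HP := submodule_capsub HA' (submodule_addsub HA HBs.1).
have [_ [K PK]] := HC2 _ _ HP HBs (cap_complement_sum_iso HA HBs.1 AA' AB).
split; first exact: submodule_addsub HA HBs.1.
by exists (capsub A' K); apply: complement_sum_of_cap.
Qed.

End Submodules.

Theorem theorem2p8 (R : pzRingType) (M : lmodType R^c) :
  qppi M -> (continuous M <-> quasi_continuous M).
Proof.
move=> qppiM; split=> [[HC1 HC2] | [HC1 _]]; split=> //.
- exact: C2_C3.
- exact: qppi_C1_C2.
Qed.
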